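(* Let $\mathcal{X}$ and $\mathcal{B}$ be small categories with finite limits and $L : \mathcal{X}\to\mathcal{B}$ a functor with fully faithful right adjoint $R$. Consider the induced essential local geometric morphism $\widehat{\mathcal{X}} \to \widehat{\mathcal{B}}$ between presheaf toposes. The following are equivalent: (1) this geometric morphism is molecular; (2) the adjunction $L\dashv R$ is semi-left-exact.
   Context: $\widehat{\mathcal{C}}$ denotes the presheaf topos $\mathrm{Set}^{\mathcal{C}^{op}}$. The geometric morphism induced by $L\dashv R$ has inverse image $L^* : \widehat{\mathcal{B}}\to\widehat{\mathcal{X}}$ given by precomposition with $L$, whose left adjoint $L_!$ is the left Kan extension along $L$, and direct image given by precomposition with $R$ (which has a fully faithful right adjoint). With $\sigma$ the unit of $L\dashv R$, the adjunction is semi-left-exact if for every pullback of $X\xrightarrow{\sigma_X}R(LX)\xleftarrow{g}RB$ ($X\in\mathcal{X}$, $B\in\mathcal{B}$) with vertex $Y$, the projection $u:Y\to RB$ satisfies that $Lu$ is an isomorphism. A geometric morphism $p:\mathcal{E}\to\mathcal{S}$ is molecular if for every $A$ in $\mathcal{S}$ the functor $p^*/A : \mathcal{S}/A\to\mathcal{E}/p^*A$ is cartesian closed. *)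

Set Implicit Arguments.
Set Universe Polymorphism.

Record Cat := {
  ob : Type;
  hom : ob -> ob -> Type;
  idm : forall a, hom a a;
  cmp : forall a b c, hom b c -> hom a b -> hom a c;
  cmp_id_l : forall a b (f : hom a b), cmp (idm b) f = f;
  cmp_id_r : forall a b (f : hom a b), cmp f (idm a) = f;
  cmp_assoc : forall a b c d (f : hom c d) (g : hom b c) (h : hom a b),
      cmp f (cmp g h) = cmp (cmp f g) h }.
Arguments hom {C} a b : rename.
Arguments idm {C} a : rename.
Arguments cmp {C a b c} f g : rename.

Definition is_iso {C : Cat} {a b : ob C} (f : hom a b) : Prop :=
  exists g : hom b a, cmp g f = idm a /\ cmp f g = idm b.

Definition is_pullback {C : Cat} {a b c : ob C} (f : hom a c) (g : hom b c)
    {p : ob C} (pa : hom p a) (pb : hom p b) : Prop :=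
  cmp f pa = cmp g pb /\
  forall (q : ob C) (qa : hom q a) (qb : hom q b), cmp f qa = cmp g qb ->
    exists! h : hom q p, cmp pa h = qa /\ cmp pb h = qb.

Definition has_terminal (C : Cat) : Prop :=
  exists t : ob C, forall a : ob C, exists! h : hom a t, True.

Definition has_pullbacks (C : Cat) : Prop :=
  forall (a b c : ob C) (f : hom a c) (g : hom b c),
    exists (p : ob C) (pa : hom p a) (pb : hom p b), is_pullback f g pa pb.

Definition has_finite_limits (C : Cat) : Prop := has_terminal C /\ has_pullbacks C.

Record Functor (C D : Cat) := {
  fob : ob C -> ob D;
  fmap : forall a b, @hom C a b -> @hom D (fob a) (fob b);
  fmap_id : forall a, fmap a a (idm a) = idm (fob a);
  fmap_cmp : forall a b c (f : @hom C b c) (g : @hom C a b),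
      fmap a c (cmp f g) = cmp (fmap b c f) (fmap a b g) }.
Arguments fob {C D} F a : rename.
Arguments fmap {C D} F {a b} f : rename.

Definition fully_faithful {C D : Cat} (F : Functor C D) : Prop :=
  forall a b : ob C,
    (forall f g : hom a b, fmap F f = fmap F g -> f = g) /\
    (forall h : hom (fob F a) (fob F b), exists f : hom a b, fmap F f = h).

Record Adjunction (X B : Cat) (L : Functor X B) (R : Functor B X) := {
  unit : forall x : ob X, hom x (fob R (fob L x));
  counit : forall b : ob B, hom (fob L (fob R b)) b;
  unit_nat : forall (x y : ob X) (f : hom x y),
      cmp (unit y) f = cmp (fmap R (fmap L f)) (unit x);
  counit_nat : forall (b c : ob B) (f : hom b c),
      cmp (counit c) (fmap L (fmap R f)) = cmp f (counit b);
  triangle_L : forall x : ob X,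
      cmp (counit (fob L x)) (fmap L (unit x)) = idm (fob L x);
  triangle_R : forall b : ob B,
      cmp (fmap R (counit b)) (unit (fob R b)) = idm (fob R b) }.
Arguments unit {X B L R} a x : rename.

Definition semi_left_exact {X B : Cat} {L : Functor X B} {R : Functor B X}
    (adj : Adjunction L R) : Prop :=
  forall (x : ob X) (b : ob B) (g : hom (fob R b) (fob R (fob L x)))
         (y : ob X) (v : hom y x) (u : hom y (fob R b)),
    is_pullback (unit adj x) g v u -> is_iso (fmap L u).

Record Psh (C : Cat) := {
  pob : ob C -> Type;
  pact : forall {c d : ob C}, hom d c -> pob c -> pob d;
  pact_id : forall c (x : pob c), pact (idm c) x = x;
  pact_cmp : forall c d e (f : hom d c) (g : hom e d) (x : pob c),
      pact (cmp f g) x = pact g (pact f x) }.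
Arguments pob {C} P c : rename.
Arguments pact {C} P {c d} f x : rename.

Record PshHom (C : Cat) (P Q : Psh C) := {
  ncomp : forall c, pob P c -> pob Q c;
  nnat : forall c d (f : hom d c) (x : pob P c),
      ncomp d (pact P f x) = pact Q f (ncomp c x) }.
Arguments ncomp {C P Q} h c x : rename.

Definition psh_cmp {C : Cat} {P Q S : Psh C} (g : PshHom Q S) (f : PshHom P Q) :
  PshHom P S.
Proof.
  refine {| ncomp := fun c x => ncomp g c (ncomp f c x) |}.
  intros c d h x. rewrite (nnat f), (nnat g). reflexivity.
Defined.

Record SlOb (C : Cat) (A : Psh C) := {
  sob : Psh C;
  sarr : PshHom sob A }.
Arguments sob {C A} U : rename.
Arguments sarr {C A} U : rename.

Record SlHom (C : Cat) (A : Psh C) (U V : SlOb A) := {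
  sh : PshHom (sob U) (sob V);
  sh_tri : forall c (x : pob (sob U) c), ncomp (sarr V) c (ncomp sh c x) = ncomp (sarr U) c x }.
Arguments sh {C A U V} h : rename.

Definition sl_cmp {C : Cat} {A : Psh C} {U V W : SlOb A}
  (g : SlHom V W) (f : SlHom U V) : SlHom U W.
Proof.
  refine {| sh := psh_cmp (sh g) (sh f) |}.
  intros c x; simpl. rewrite (sh_tri g), (sh_tri f). reflexivity.
Defined.

Definition sl_eq {C : Cat} {A : Psh C} {U V : SlOb A} (f g : SlHom U V) : Prop :=
  forall c (x : pob (sob U) c), ncomp (sh f) c x = ncomp (sh g) c x.

Definition sl_terminal {C : Cat} {A : Psh C} (T : SlOb A) : Prop :=
  forall U : SlOb A, exists h : SlHom U T, forall h' : SlHom U T, sl_eq h h'.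

Definition sl_product {C : Cat} {A : Psh C} {U V P : SlOb A}
  (p1 : SlHom P U) (p2 : SlHom P V) : Prop :=
  forall (W : SlOb A) (f : SlHom W U) (g : SlHom W V),
    exists h : SlHom W P,
      sl_eq (sl_cmp p1 h) f /\ sl_eq (sl_cmp p2 h) g /\
      forall h' : SlHom W P, sl_eq (sl_cmp p1 h') f -> sl_eq (sl_cmp p2 h') g ->
        sl_eq h h'.

(** [E] together with a product cone [p1 : P -> E, p2 : P -> Z] and
    [ev : P ~ E x Z -> Y] is an exponential Y^Z. *)
Definition sl_exponential {C : Cat} {A : Psh C} {Y Z E P : SlOb A}
  (p1 : SlHom P E) (p2 : SlHom P Z) (ev : SlHom P Y) : Prop :=
  sl_product p1 p2 /\
  forall (W Q : SlOb A) (q1 : SlHom Q W) (q2 : SlHom Q Z) (f : SlHom Q Y),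
    sl_product q1 q2 ->
    exists g : SlHom W E,
      (exists h : SlHom Q P,
          sl_eq (sl_cmp p1 h) (sl_cmp g q1) /\ sl_eq (sl_cmp p2 h) q2 /\
          sl_eq (sl_cmp ev h) f) /\
      forall g' : SlHom W E,
        (exists h' : SlHom Q P,
            sl_eq (sl_cmp p1 h') (sl_cmp g' q1) /\ sl_eq (sl_cmp p2 h') q2 /\
            sl_eq (sl_cmp ev h') f) ->
        sl_eq g g'.

Definition pb_psh {X B : Cat} (L : Functor X B) (P : Psh B) : Psh X.
Proof.
  refine {| pob := fun x => pob P (fob L x);
            pact := fun c d f p => pact P (fmap L f) p |}.
  - intros c p. rewrite fmap_id. apply pact_id.
  - intros c d e f g p. rewrite fmap_cmp. apply pact_cmp.
Defined.

Definition pb_hom {X B : Cat} (L : Functor X B) {P Q : Psh B} (h : PshHom P Q) :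
  PshHom (pb_psh L P) (pb_psh L Q).
Proof.
  refine {| ncomp := fun (x : ob X) (p : pob (pb_psh L P) x) => ncomp h (fob L x) p : pob (pb_psh L Q) x |}.
  intros c d f p. simpl. apply (nnat h).
Defined.

Definition pb_slob {X B : Cat} (L : Functor X B) {A : Psh B} (U : SlOb A) :
  SlOb (pb_psh L A) :=
  {| sob := pb_psh L (sob U); sarr := pb_hom L (sarr U) |}.

Definition pb_slhom {X B : Cat} (L : Functor X B) {A : Psh B} {U V : SlOb A}
  (h : SlHom U V) : SlHom (pb_slob L U) (pb_slob L V).
Proof.
  refine (@Build_SlHom X (pb_psh L A) (pb_slob L U) (pb_slob L V) (pb_hom L (sh h)) _).
  intros c p. simpl. apply (sh_tri h).
Defined.

Definition pb_slice_cartesian_closed {X B : Cat} (L : Functor X B) (A : Psh B) : Prop :=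
  (forall T : SlOb A, sl_terminal T -> sl_terminal (pb_slob L T)) /\
  (forall (U V P : SlOb A) (p1 : SlHom P U) (p2 : SlHom P V),
      sl_product p1 p2 -> sl_product (pb_slhom L p1) (pb_slhom L p2)) /\
  (forall (Y Z E P : SlOb A) (p1 : SlHom P E) (p2 : SlHom P Z) (ev : SlHom P Y),
      sl_exponential p1 p2 ev ->
      sl_exponential (pb_slhom L p1) (pb_slhom L p2) (pb_slhom L ev)).

(** The geometric morphism \hat{X} -> \hat{B} induced by L -| R (inverse image L^* )
    is molecular. *)
Definition molecular_induced {X B : Cat} (L : Functor X B) : Prop :=
  forall A : Psh B, pb_slice_cartesian_closed L A.

(** Slices of presheaf categories are again presheaf-like, so their terminal
    objects, products and exponentials can be described pointwise: a terminal
    object or a product is computed stage by stage, and an element of an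
    exponential [Y^Z] over [a ∈ A(c)] is a natural "family" assigning to each
    [m : d -> c] and [z ∈ Z(d)] over [a.m] an element of [Y(d)].  Since [L^*]
    is evaluation at the objects [L x], it always preserves terminal objects and
    products, and it preserves exponentials exactly when every natural family of
    [L^*Z -> L^*Y] over [x] extends uniquely to a natural family of [Z -> Y]
    over [L x] ([family_extension]).  The theorem is then proved as
      molecular <-> family_extension <-> semi-left-exact.
    - molecular -> family_extension: apply molecularity to the canonical
      exponential of families;
    - family_extension -> molecular: transport pointwise exponentials;
    - semi-left-exact -> family_extension: every [k : d -> L x] is isomorphic
      over [L x] to some [L v] (a "cover", from the pullback of the unit along
      [R k]), so a family over [x] has a unique extension given by transport;
    - family_extension -> semi-left-exact: extending a family built from the
      pullback produces an inverse of the transposed projection [L y -> b]. *)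

From Stdlib Require Import FunctionalExtensionality ProofIrrelevance ClassicalEpsilon.

Set Implicit Arguments.
Set Universe Polymorphism.

Arguments cmp_id_l {C a b} f : rename.
Arguments cmp_id_r {C a b} f : rename.
Arguments cmp_assoc {C a b c d} f g h : rename.

Definition choose {T : Type} {P : T -> Prop} (H : exists x, P x) : T :=
  proj1_sig (constructive_indefinite_description P H).

Lemma choose_spec {T : Type} {P : T -> Prop} (H : exists x, P x) : P (choose H).
Proof. exact (proj2_sig (constructive_indefinite_description P H)). Qed.

Section Isomorphisms.
Context {C : Cat}.

Lemma iso_cmp {a b c : ob C} (f : hom b c) (g : hom a b) :
  is_iso f -> is_iso g -> is_iso (cmp f g).
Proof.
  intros [f' [Hf1 Hf2]] [g' [Hg1 Hg2]]. exists (cmp g' f'). split.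
  - rewrite <- cmp_assoc, (cmp_assoc f' f g), Hf1, cmp_id_l. exact Hg1.
  - rewrite <- cmp_assoc, (cmp_assoc g g' f'), Hg2, cmp_id_l. exact Hf2.
Qed.

Lemma iso_cancel_l {a b c : ob C} (f : hom b c) (g : hom a b) :
  is_iso f -> is_iso (cmp f g) -> is_iso g.
Proof.
  intros [f' [Hf1 Hf2]] [h [Hh1 Hh2]]. exists (cmp h f). split.
  - rewrite <- cmp_assoc. exact Hh1.
  - transitivity (cmp (cmp f' f) (cmp g (cmp h f))); [now rewrite Hf1, cmp_id_l|].
    rewrite <- cmp_assoc, (cmp_assoc f g (cmp h f)), (cmp_assoc (cmp f g) h f), Hh2, cmp_id_l.
    exact Hf1.
Qed.

End Isomorphisms.

Lemma unique_agree {T : Type} {P : T -> Prop} {x y : T} :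
  (exists! t, P t) -> P x -> P y -> x = y.
Proof. intros [t [_ Ht]] Hx Hy. rewrite <- (Ht x Hx). exact (Ht y Hy). Qed.

Section Representables.
Context {C : Cat}.

Definition representable (c : ob C) : Psh C.
Proof.
  refine {| pob := fun d => hom d c;
            pact := fun d e (f : hom e d) (k : hom d c) => cmp k f |}.
  - intros; apply cmp_id_r.
  - intros; apply cmp_assoc.
Defined.

Definition yoneda_map (P : Psh C) (c : ob C) (p : pob P c) : PshHom (representable c) P.
Proof.
  refine (@Build_PshHom C (representable c) P (fun d (k : hom d c) => pact P k p) _).
  intros d e f k; simpl. apply pact_cmp.
Defined.

End Representables.

Section SliceLimits.
Context {C : Cat} {A : Psh C}.

(** An element [a] of [A] at stage [c], as the slice object  hom(-, c) --a--> A.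
    These objects detect all the universal properties below. *)
Definition elem_slice (c : ob C) (a : pob A c) : SlOb A :=
  {| sob := representable c; sarr := yoneda_map A c a |}.

Definition elem_hom {c : ob C} {a : pob A c} (U : SlOb A) (u : pob (sob U) c)
  (Hu : ncomp (sarr U) c u = a) : SlHom (elem_slice c a) U.
Proof.
  refine (@Build_SlHom C A (elem_slice c a) U (yoneda_map (sob U) c u) _).
  intros d k; simpl. rewrite (nnat (sarr U)), Hu. reflexivity.
Defined.

Lemma elem_hom_id {c : ob C} {a : pob A c} (U : SlOb A) (u : pob (sob U) c) Hu :
  ncomp (sh (@elem_hom c a U u Hu)) c (idm c) = u.
Proof. apply pact_id. Qed.

Lemma slhom_of_rel (U V : SlOb A) (rel : forall c, pob (sob U) c -> pob (sob V) c -> Prop) :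
  (forall c u, exists! v, rel c u v) ->
  (forall c d (k : hom d c) u v, rel c u v -> rel d (pact (sob U) k u) (pact (sob V) k v)) ->
  (forall c u v, rel c u v -> ncomp (sarr V) c v = ncomp (sarr U) c u) ->
  exists h : SlHom U V, forall c u, rel c u (ncomp (sh h) c u).
Proof.
  intros Hfun Hstab Hover.
  pose (hc := fun c u => choose (Hfun c u)).
  assert (Hhc : forall c u, rel c u (hc c u)) by (intros; apply (choose_spec (Hfun c u))).
  unshelve eexists.
  - unshelve refine (@Build_SlHom C A U V (@Build_PshHom C (sob U) (sob V) hc _) _).
    + intros c d k u. apply (unique_agree (Hfun d (pact (sob U) k u))); auto.
    + intros c u. apply Hover, Hhc.
  - exact Hhc.
Qed.

(** ** Terminal objects, computed pointwise *)

Definition pw_terminal (T : SlOb A) : Prop :=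
  forall c (a : pob A c), exists! t, ncomp (sarr T) c t = a.

Lemma sl_terminal_pw (T : SlOb A) : sl_terminal T <-> pw_terminal T.
Proof.
  split.
  - intros HT c a. destruct (HT (elem_slice c a)) as [h Hh].
    exists (ncomp (sh h) c (idm c)). split.
    + rewrite (sh_tri h). apply pact_id.
    + intros t Ht. rewrite (Hh (elem_hom T t Ht)). apply elem_hom_id.
  - intros HT U.
    destruct (slhom_of_rel U T (fun c u t => ncomp (sarr T) c t = ncomp (sarr U) c u))
      as [h Hh]; auto.
    + intros c d k u t Ht. rewrite !nnat, Ht. reflexivity.
    + exists h. intros h' c u. apply (unique_agree (HT c (ncomp (sarr U) c u))); auto.
      apply sh_tri.
Qed.

(** ** Binary products, computed pointwise as fibre products over [A] *)

Definition pw_product {U V P : SlOb A} (p1 : SlHom P U) (p2 : SlHom P V) : Prop :=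
  forall c u v, ncomp (sarr U) c u = ncomp (sarr V) c v ->
    exists! p, ncomp (sh p1) c p = u /\ ncomp (sh p2) c p = v.

Lemma pw_product_ext {U V P : SlOb A} {p1 : SlHom P U} {p2 : SlHom P V}
  (HP : pw_product p1 p2) {c : ob C} {p p' : pob (sob P) c} :
  ncomp (sh p1) c p = ncomp (sh p1) c p' -> ncomp (sh p2) c p = ncomp (sh p2) c p' -> p = p'.
Proof.
  intros E1 E2.
  assert (Hc : ncomp (sarr U) c (ncomp (sh p1) c p) = ncomp (sarr V) c (ncomp (sh p2) c p))
    by (rewrite !sh_tri; reflexivity).
  apply (unique_agree (HP c _ _ Hc)); auto.
Qed.

Lemma sl_product_pw {U V P : SlOb A} (p1 : SlHom P U) (p2 : SlHom P V) :
  sl_product p1 p2 <-> pw_product p1 p2.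
Proof.
  split.
  - intros HP c u v Huv.
    destruct (HP _ (elem_hom U u eq_refl) (elem_hom V v (eq_sym Huv))) as [h [H1 [H2 Hh]]].
    exists (ncomp (sh h) c (idm c)). split.
    + split; etransitivity; [apply (H1 c (idm c))| |apply (H2 c (idm c))|];
        apply elem_hom_id.
    + intros p [Hp1 Hp2].
      assert (Hp : ncomp (sarr P) c p = ncomp (sarr U) c u) by (rewrite <- (sh_tri p1), Hp1; reflexivity).
      rewrite (Hh (elem_hom P p Hp)); [apply elem_hom_id| |];
        intros d k; simpl; rewrite nnat; [rewrite Hp1|rewrite Hp2]; reflexivity.
  - intros HP W f g.
    destruct (slhom_of_rel W P (fun c w p => ncomp (sh p1) c p = ncomp (sh f) c w /\
                                            ncomp (sh p2) c p = ncomp (sh g) c w))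
      as [h Hh].
    + intros c w. apply HP. rewrite !sh_tri. reflexivity.
    + intros c d k w p [E1 E2]. rewrite !nnat, E1, E2. split; reflexivity.
    + intros c w p [E1 _]. rewrite <- (sh_tri p1), E1. apply sh_tri.
    + exists h. split; [|split]; [intros c w; apply Hh..|].
      intros h' E1 E2 c w. apply (pw_product_ext HP).
      * rewrite (proj1 (Hh c w)). symmetry. apply E1.
      * rewrite (proj2 (Hh c w)). symmetry. apply E2.
Qed.

Definition fiber_psh (U V : SlOb A) : Psh C.
Proof.
  unshelve refine {| pob := fun c => {p : pob (sob U) c * pob (sob V) c |
                                      ncomp (sarr U) c (fst p) = ncomp (sarr V) c (snd p)};
                     pact := fun c d f p => exist _ (pact (sob U) f (fst (proj1_sig p)),
                                                     pact (sob V) f (snd (proj1_sig p))) _ |}.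
  - simpl. rewrite !nnat. destruct p as [p Hp]; simpl. rewrite Hp; reflexivity.
  - intros c [[u v] H]; simpl. apply subset_eq_compat. rewrite !pact_id; reflexivity.
  - intros c d e f g [[u v] H]; simpl. apply subset_eq_compat. rewrite !pact_cmp; reflexivity.
Defined.

Definition fiber (U V : SlOb A) : SlOb A.
Proof.
  refine {| sob := fiber_psh U V;
            sarr := @Build_PshHom C (fiber_psh U V) A
                      (fun c p => ncomp (sarr U) c (fst (proj1_sig p))) _ |}.
  intros c d f [[u v] H]; simpl. apply nnat.
Defined.

Definition fiber_fst (U V : SlOb A) : SlHom (fiber U V) U.
Proof.
  unshelve refine (@Build_SlHom C A (fiber U V) U
            (@Build_PshHom C (fiber_psh U V) (sob U) (fun c p => fst (proj1_sig p)) _) _);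
    reflexivity.
Defined.

Definition fiber_snd (U V : SlOb A) : SlHom (fiber U V) V.
Proof.
  unshelve refine (@Build_SlHom C A (fiber U V) V
            (@Build_PshHom C (fiber_psh U V) (sob V) (fun c p => snd (proj1_sig p)) _) _).
  - reflexivity.
  - intros c [[u v] H]. symmetry. exact H.
Defined.

Lemma fiber_pw_product (U V : SlOb A) : pw_product (fiber_fst U V) (fiber_snd U V).
Proof.
  intros c u v H. exists (exist _ (u, v) H). split; [split; reflexivity|].
  intros [[u' v'] H'] [E1 E2]; simpl in E1, E2. subst u' v'.
  apply subset_eq_compat. reflexivity.
Qed.

End SliceLimits.

Section Families.
Context {C : Cat} {A : Psh C}.

(** When it
    is natural ([is_family]) it is exactly a slice map
    [elem_slice c a x_A Z -> Y], i.e. an element of the exponential [Y^Z] at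
    [(c, a)]: exponentials in presheaf slices are described by families. *)
Definition family (Z Y : SlOb A) (c : ob C) (a : pob A c) : Type :=
  forall d (m : hom d c) (z : pob (sob Z) d), ncomp (sarr Z) d z = pact A m a -> pob (sob Y) d.

Record is_family {Z Y : SlOb A} {c : ob C} {a : pob A c} (phi : family Z Y c a) : Prop := {
  fam_over : forall d m z H, ncomp (sarr Y) d (phi d m z H) = pact A m a;
  fam_nat : forall d e (m : hom d c) (n : hom e d) z H H',
      phi e (cmp m n) (pact (sob Z) n z) H' = pact (sob Y) n (phi d m z H) }.

(** Two families agree at every common argument.  The bases are allowed to
    differ syntactically; the notion is only used when they are equal. *)
Definition fam_agree {Z Y : SlOb A} {c : ob C} {a a' : pob A c}
  (phi : family Z Y c a) (psi : family Z Y c a') : Prop :=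
  forall d m z H H', phi d m z H = psi d m z H'.

Lemma fam_resp {Z Y : SlOb A} {c : ob C} {a : pob A c} (phi : family Z Y c a)
  d m m' z z' H H' : m = m' -> z = z' -> phi d m z H = phi d m' z' H'.
Proof. intros -> ->. f_equal. apply proof_irrelevance. Qed.

Lemma fam_nat_eq {Z Y : SlOb A} {c : ob C} {a : pob A c} {phi : family Z Y c a}
  (Hphi : is_family phi) d e (m : hom d c) (n : hom e d) z H m' z' H' :
  m' = cmp m n -> z' = pact (sob Z) n z -> phi e m' z' H' = pact (sob Y) n (phi d m z H).
Proof. intros -> ->. apply (fam_nat Hphi). Qed.

Definition fam_act {Z Y : SlOb A} {c d : ob C} (k : hom d c) {a : pob A c}
  (phi : family Z Y c a) : family Z Y d (pact A k a) :=
  fun e m z H => phi e (cmp k m) z (eq_trans H (eq_sym (pact_cmp A c d e k m a))).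

Lemma fam_act_is_family {Z Y : SlOb A} {c d : ob C} (k : hom d c) {a : pob A c}
  (phi : family Z Y c a) : is_family phi -> is_family (fam_act k phi).
Proof.
  intros Hphi. split.
  - intros e m z H. unfold fam_act. rewrite (fam_over Hphi). apply pact_cmp.
  - intros e e' m n z H H'. unfold fam_act. apply (fam_nat_eq Hphi); [|reflexivity].
    apply cmp_assoc.
Qed.

Definition family_hom {Z Y : SlOb A} {c : ob C} {a : pob A c} (phi : family Z Y c a)
  (Hphi : is_family phi) : SlHom (fiber (elem_slice c a) Z) Y.
Proof.
  unshelve refine (@Build_SlHom C A (fiber (elem_slice c a) Z) Y
    (@Build_PshHom C (fiber_psh (elem_slice c a) Z) (sob Y)
       (fun d q => phi d (fst (proj1_sig q)) (snd (proj1_sig q)) (eq_sym (proj2_sig q))) _) _).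
  - intros d e n [[m z] Hq]; simpl. apply (fam_nat_eq Hphi); reflexivity.
  - intros d [[m z] Hq]; simpl. apply (fam_over Hphi).
Defined.

Definition id_family (Z : SlOb A) (c : ob C) (a : pob A c) : family Z Z c a :=
  fun d m z H => z.

Lemma id_family_is_family (Z : SlOb A) (c : ob C) (a : pob A c) : is_family (id_family Z c a).
Proof. split; intros; [assumption|reflexivity]. Qed.

End Families.

Section Exponentials.
Context {C : Cat} {A : Psh C}.
Context {Z Y E P : SlOb A} (p1 : SlHom P E) (p2 : SlHom P Z) (ev : SlHom P Y).

Definition represents {c : ob C} {a : pob A c} (e : pob (sob E) c) (phi : family Z Y c a) : Prop :=
  forall d m z H (p : pob (sob P) d), ncomp (sh p1) d p = pact (sob E) m e ->
    ncomp (sh p2) d p = z -> ncomp (sh ev) d p = phi d m z H.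

Definition pw_exponential : Prop :=
  forall c a (phi : family Z Y c a), is_family phi ->
    exists! e, ncomp (sarr E) c e = a /\ represents e phi.

Lemma represents_agree {c : ob C} {a a' : pob A c} (e : pob (sob E) c)
  (phi : family Z Y c a) (psi : family Z Y c a') :
  a = a' -> fam_agree phi psi -> represents e phi -> represents e psi.
Proof. intros <- Hag Hr d m z H p Hp1 Hp2. rewrite (Hr d m z H p Hp1 Hp2). apply Hag. Qed.

Lemma represents_act {c d : ob C} (k : hom d c) {a : pob A c} (e : pob (sob E) c)
  (phi : family Z Y c a) : represents e phi -> represents (pact (sob E) k e) (fam_act k phi).
Proof.
  intros Hr f m z H p Hp1 Hp2. apply (Hr f (cmp k m) z _ p); [|exact Hp2].
  rewrite Hp1. symmetry. apply pact_cmp.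
Qed.

Section WithProduct.
Hypothesis HP : pw_product p1 p2.

Lemma represents_fam_unique {c : ob C} {a : pob A c} (e : pob (sob E) c)
  (phi psi : family Z Y c a) :
  ncomp (sarr E) c e = a -> represents e phi -> represents e psi -> fam_agree phi psi.
Proof.
  intros He Hphi Hpsi d m z H H'.
  assert (Hc : ncomp (sarr E) d (pact (sob E) m e) = ncomp (sarr Z) d z)
    by (rewrite nnat, He; symmetry; exact H).
  destruct (HP d _ _ Hc) as [p [[Hp1 Hp2] _]].
  rewrite <- (Hphi d m z H p Hp1 Hp2). exact (Hpsi d m z H' p Hp1 Hp2).
Qed.

Lemma element_family {c : ob C} {a : pob A c} (e : pob (sob E) c) :
  ncomp (sarr E) c e = a -> exists phi : family Z Y c a, is_family phi /\ represents e phi.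
Proof.
  intros <-.
  assert (Hc : forall d m z, ncomp (sarr Z) d z = pact A m (ncomp (sarr E) c e) ->
                 ncomp (sarr E) d (pact (sob E) m e) = ncomp (sarr Z) d z)
    by (intros d m z H; rewrite nnat; symmetry; exact H).
  pose (pair := fun d m z H => choose (HP d _ z (Hc d m z H))).
  assert (Hpair : forall d m z H, ncomp (sh p1) d (pair d m z H) = pact (sob E) m e /\
                                  ncomp (sh p2) d (pair d m z H) = z)
    by (intros; apply (choose_spec (HP d _ z (Hc d m z H)))).
  exists (fun d m z H => ncomp (sh ev) d (pair d m z H)). split; [split|].
  - intros d m z H. rewrite sh_tri, <- (sh_tri p2), (proj2 (Hpair d m z H)). exact H.
  - intros d f m n z H H'. rewrite <- nnat. f_equal. apply (pw_product_ext HP).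
    + rewrite (proj1 (Hpair _ _ _ _)), nnat, (proj1 (Hpair _ _ _ _)). apply pact_cmp.
    + rewrite (proj2 (Hpair _ _ _ _)), nnat, (proj2 (Hpair _ _ _ _)). reflexivity.
  - intros d m z H p Hp1 Hp2. f_equal. apply (pw_product_ext HP).
    + rewrite Hp1. symmetry. apply (proj1 (Hpair _ _ _ _)).
    + rewrite Hp2. symmetry. apply (proj2 (Hpair _ _ _ _)).
Qed.

End WithProduct.

(** A slice exponential is pointwise an exponential: test its universal
    property on the fibre products  [elem_slice c a x_A Z]. *)
Lemma sl_exponential_pw_exponential : sl_exponential p1 p2 ev -> pw_exponential.
Proof.
  intros [HPsl Huniv] c a phi Hphi.
  pose proof (proj1 (sl_product_pw p1 p2) HPsl) as HP.
  destruct (Huniv _ _ _ _ (family_hom Hphi)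
              (proj2 (sl_product_pw _ _) (fiber_pw_product (elem_slice c a) Z)))
    as [g [[h [Hh1 [Hh2 Hh3]]] Hg]].
  assert (Hrep : forall e (He : ncomp (sarr E) c e = a), represents e phi ->
                   sl_eq g (elem_hom E e He)).
  { intros e He Hr. apply Hg.
    destruct (HPsl _ (sl_cmp (elem_hom E e He) (fiber_fst _ Z)) (fiber_snd _ Z))
      as [h' [E1 [E2 _]]].
    exists h'. split; [exact E1|split; [exact E2|]].
    intros d [[m z] Hq]. apply (Hr d m z (eq_sym Hq));
      [apply (E1 d (exist _ (m, z) Hq))|apply (E2 d (exist _ (m, z) Hq))]. }
  exists (ncomp (sh g) c (idm c)). split; [split|].
  - rewrite sh_tri. apply pact_id.
  - intros d m z H p Hp1 Hp2.
    pose (q := exist (fun q : pob (representable c) d * pob (sob Z) d =>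
                 ncomp (sarr (elem_slice c a)) d (fst q) = ncomp (sarr Z) d (snd q))
                 (m, z) (eq_sym H)).
    assert (Ep : p = ncomp (sh h) d q).
    { apply (pw_product_ext HP).
      - rewrite Hp1. etransitivity; [|symmetry; apply (Hh1 d q)].
        simpl. rewrite <- nnat. simpl. rewrite cmp_id_l. reflexivity.
      - rewrite Hp2. etransitivity; [|symmetry; apply (Hh2 d q)]. reflexivity. }
    rewrite Ep. etransitivity; [exact (Hh3 d q)|]. simpl. apply fam_resp; reflexivity.
  - intros e [He Hr]. rewrite (Hrep e He Hr c (idm c)). apply elem_hom_id.
Qed.

Section Currying.
Hypothesis HE : pw_exponential.
Context {W Q : SlOb A} (q1 : SlHom Q W) (q2 : SlHom Q Z) (f : SlHom Q Y).
Hypothesis HQ : pw_product q1 q2.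

Lemma curry_compat {c d : ob C} (w : pob (sob W) c) (m : hom d c) (z : pob (sob Z) d) :
  ncomp (sarr Z) d z = pact A m (ncomp (sarr W) c w) ->
  ncomp (sarr W) d (pact (sob W) m w) = ncomp (sarr Z) d z.
Proof. intros H. rewrite nnat. symmetry. exact H. Qed.

Definition curry_pair {c : ob C} (w : pob (sob W) c) d m z
  (H : ncomp (sarr Z) d z = pact A m (ncomp (sarr W) c w)) : pob (sob Q) d :=
  choose (HQ d _ _ (curry_compat w m z H)).

Lemma curry_pair_spec {c : ob C} (w : pob (sob W) c) d m z H :
  ncomp (sh q1) d (curry_pair w d m z H) = pact (sob W) m w /\
  ncomp (sh q2) d (curry_pair w d m z H) = z.
Proof. apply (choose_spec (HQ d _ _ (curry_compat w m z H))). Qed.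

Definition curry_family {c : ob C} (w : pob (sob W) c) : family Z Y c (ncomp (sarr W) c w) :=
  fun d m z H => ncomp (sh f) d (curry_pair w d m z H).

Lemma curry_is_family {c : ob C} (w : pob (sob W) c) : is_family (curry_family w).
Proof.
  split.
  - intros d m z H. unfold curry_family.
    rewrite sh_tri, <- (sh_tri q1), (proj1 (curry_pair_spec _ _ _ _ _)). apply nnat.
  - intros d e m n z H H'. unfold curry_family. rewrite <- nnat. f_equal.
    apply (pw_product_ext HQ).
    + rewrite (proj1 (curry_pair_spec _ _ _ _ _)), nnat, (proj1 (curry_pair_spec _ _ _ _ _)).
      apply pact_cmp.
    + rewrite (proj2 (curry_pair_spec _ _ _ _ _)), nnat, (proj2 (curry_pair_spec _ _ _ _ _)).
      reflexivity.
Qed.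

Lemma curry_act {c d : ob C} (k : hom d c) (w : pob (sob W) c) :
  fam_agree (fam_act k (curry_family w)) (curry_family (pact (sob W) k w)).
Proof.
  intros e m z H H'. unfold fam_act, curry_family. f_equal. apply (pw_product_ext HQ).
  - rewrite !(proj1 (curry_pair_spec _ _ _ _ _)). apply pact_cmp.
  - rewrite !(proj2 (curry_pair_spec _ _ _ _ _)). reflexivity.
Qed.

Lemma curry_eval d (q : pob (sob Q) d) H :
  curry_family (ncomp (sh q1) d q) d (idm d) (ncomp (sh q2) d q) H = ncomp (sh f) d q.
Proof.
  unfold curry_family. f_equal. apply (pw_product_ext HQ).
  - rewrite (proj1 (curry_pair_spec _ _ _ _ _)). apply pact_id.
  - apply (proj2 (curry_pair_spec _ _ _ _ _)).
Qed.

Lemma curry_transpose :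
  exists g : SlHom W E, forall c w,
    ncomp (sarr E) c (ncomp (sh g) c w) = ncomp (sarr W) c w /\
    represents (ncomp (sh g) c w) (curry_family w).
Proof.
  apply (slhom_of_rel W E (fun c w e => ncomp (sarr E) c e = ncomp (sarr W) c w /\
                                        represents e (curry_family w))).
  - intros c w. apply HE, curry_is_family.
  - intros c d k w e [He Hr]. split.
    + rewrite !nnat, He. reflexivity.
    + apply (@represents_agree d _ _ (pact (sob E) k e) (fam_act k (curry_family w))).
      * symmetry. apply nnat.
      * apply curry_act.
      * apply represents_act, Hr.
  - intros c w e [He _]. exact He.
Qed.

End Currying.

Lemma pw_exponential_sl_exponential :
  pw_product p1 p2 -> pw_exponential -> sl_exponential p1 p2 ev.
Proof.
  intros HP HE. split; [apply sl_product_pw, HP|].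
  intros W Q q1 q2 f HQsl. pose proof (proj1 (sl_product_pw q1 q2) HQsl) as HQ.
  destruct (curry_transpose HE f HQ) as [g Hg].
  exists g. split.
  - destruct (proj2 (sl_product_pw p1 p2) HP Q (sl_cmp g q1) q2) as [h [Hh1 [Hh2 _]]].
    exists h. split; [exact Hh1|split; [exact Hh2|]].
    intros d q. simpl.
    assert (Hq : ncomp (sarr Z) d (ncomp (sh q2) d q) =
                 pact A (idm d) (ncomp (sarr W) d (ncomp (sh q1) d q)))
      by (rewrite pact_id, !sh_tri; reflexivity).
    rewrite <- (curry_eval f HQ d q Hq).
    apply (proj2 (Hg d _)).
    + rewrite pact_id. exact (Hh1 d q).
    + exact (Hh2 d q).
  - intros g' [h' [E1 [E2 E3]]] c w.
    apply (unique_agree (HE _ _ _ (curry_is_family f HQ w))); [apply Hg|split].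
    + apply sh_tri.
    + intros d m z H p Hp1 Hp2.
      rewrite (pw_product_ext HP (p' := ncomp (sh h') d (curry_pair HQ w d m z H))).
      * exact (E3 d _).
      * rewrite Hp1. etransitivity; [|symmetry; exact (E1 d _)]. simpl.
        rewrite (proj1 (curry_pair_spec HQ _ _ _ _ _)). symmetry. apply nnat.
      * rewrite Hp2. etransitivity; [|symmetry; exact (E2 d _)].
        symmetry. apply (proj2 (curry_pair_spec HQ _ _ _ _ _)).
Qed.

End Exponentials.

Section CanonicalExponential.
Context {C : Cat} {A : Psh C} (Z Y : SlOb A).

(** The canonical exponential [Y^Z] in [\hat{C}/A]: its elements at stage [c]
    are the families from [Z] to [Y] over elements of [A(c)]. *)
Record fam_elem (c : ob C) := {
  fe_base : pob A c;
  fe_fam : family Z Y c fe_base;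
  fe_is_family : is_family fe_fam }.
Arguments fe_base {c}.
Arguments fe_fam {c}.
Arguments fe_is_family {c}.

Lemma fam_elem_eq {c : ob C} (s s' : fam_elem c) :
  fe_base s = fe_base s' -> fam_agree (fe_fam s) (fe_fam s') -> s = s'.
Proof.
  destruct s as [a phi Hphi], s' as [a' phi' Hphi']; simpl. intros <- Hag.
  assert (phi = phi') as <-.
  { do 4 (apply functional_extensionality_dep; intro). apply Hag. }
  f_equal. apply proof_irrelevance.
Qed.

Lemma fam_elem_agree {c : ob C} (s s' : fam_elem c) : s = s' -> fam_agree (fe_fam s) (fe_fam s').
Proof. intros <- d m z H H'. apply fam_resp; reflexivity. Qed.

Definition fam_psh : Psh C.
Proof.
  unshelve refine {| pob := fam_elem;
     pact := fun c d k s => {| fe_base := pact A k (fe_base s);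
                               fe_fam := fam_act k (fe_fam s);
                               fe_is_family := fam_act_is_family k (fe_is_family s) |} |}.
  - intros c s. apply fam_elem_eq; simpl.
    + apply pact_id.
    + intros d m z H H'. unfold fam_act. apply fam_resp; [apply cmp_id_l|reflexivity].
  - intros c d e f g s. apply fam_elem_eq; simpl.
    + apply pact_cmp.
    + intros e' m z H H'. unfold fam_act. apply fam_resp; [symmetry; apply cmp_assoc|reflexivity].
Defined.

Definition fam_obj : SlOb A.
Proof.
  refine {| sob := fam_psh; sarr := @Build_PshHom C fam_psh A (fun c s => fe_base s) _ |}.
  reflexivity.
Defined.

Lemma fam_eval_over d (q : pob (sob (fiber fam_obj Z)) d) :
  ncomp (sarr Z) d (snd (proj1_sig q)) = pact A (idm d) (fe_base (fst (proj1_sig q))).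
Proof. destruct q as [[s z] H]; simpl in *. rewrite pact_id. symmetry. exact H. Qed.

Definition fam_eval : SlHom (fiber fam_obj Z) Y.
Proof.
  unshelve refine (@Build_SlHom C A (fiber fam_obj Z) Y
    (@Build_PshHom C (fiber_psh fam_obj Z) (sob Y)
       (fun d q => fe_fam (fst (proj1_sig q)) d (idm d) (snd (proj1_sig q)) (fam_eval_over q)) _) _).
  - intros d e k [[s z] H]; simpl. unfold fam_act.
    apply (fam_nat_eq (fe_is_family s)); [|reflexivity].
    rewrite cmp_id_l, cmp_id_r. reflexivity.
  - intros d [[s z] H]; simpl. rewrite (fam_over (fe_is_family s)). apply pact_id.
Defined.

Lemma fam_eval_at {c : ob C} (s : fam_elem c) d m z H (q : pob (sob (fiber fam_obj Z)) d) :
  ncomp (sh (fiber_fst fam_obj Z)) d q = pact fam_psh m s ->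
  ncomp (sh (fiber_snd fam_obj Z)) d q = z -> ncomp (sh fam_eval) d q = fe_fam s d m z H.
Proof.
  destruct q as [[s' z'] Hq]; simpl. intros -> ->. cbn. unfold fam_act.
  apply fam_resp; [apply cmp_id_r|reflexivity].
Qed.

Lemma fam_obj_represents {c : ob C} {a : pob A c} (s : fam_elem c) (phi : family Z Y c a) :
  fe_base s = a ->
  represents (fiber_fst fam_obj Z) (fiber_snd fam_obj Z) fam_eval s phi <->
  fam_agree (fe_fam s) phi.
Proof.
  intros Hs. split.
  - intros Hr d m z H H'.
    assert (Hq : fe_base (pact fam_psh m s) = ncomp (sarr Z) d z)
      by (simpl; rewrite Hs; symmetry; exact H').
    pose (q := exist _ (pact fam_psh m s, z) Hq : pob (sob (fiber fam_obj Z)) d).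
    rewrite <- (fam_eval_at H q eq_refl eq_refl). exact (Hr d m z H' q eq_refl eq_refl).
  - intros Hag d m z H q Hq1 Hq2.
    assert (H' : ncomp (sarr Z) d z = pact A m (fe_base s)) by (rewrite Hs; exact H).
    rewrite (fam_eval_at H' q Hq1 Hq2). apply Hag.
Qed.

Lemma fam_obj_pw_exponential :
  pw_exponential (fiber_fst fam_obj Z) (fiber_snd fam_obj Z) fam_eval.
Proof.
  intros c a phi Hphi. exists {| fe_base := a; fe_fam := phi; fe_is_family := Hphi |}.
  split; [split|].
  - reflexivity.
  - apply fam_obj_represents; [reflexivity|]. intros d m z H H'. apply fam_resp; reflexivity.
  - intros s [Hs Hr]. apply fam_elem_eq; [symmetry; exact Hs|].
    intros d m z H H'. symmetry. apply (proj1 (fam_obj_represents s phi Hs) Hr).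
Qed.

Lemma fam_obj_exponential :
  sl_exponential (fiber_fst fam_obj Z) (fiber_snd fam_obj Z) fam_eval.
Proof.
  apply pw_exponential_sl_exponential; [apply fiber_pw_product|apply fam_obj_pw_exponential].
Qed.

End CanonicalExponential.

Section InverseImage.
Context {X B : Cat} (L : Functor X B).

Definition restrict_family {A : Psh B} {Z Y : SlOb A} {x : ob X} {a : pob A (fob L x)}
  (psi : family Z Y (fob L x) a) : family (pb_slob L Z) (pb_slob L Y) x a :=
  fun x' m z H => psi (fob L x') (fmap L m) z H.

Lemma restrict_pw_terminal {A : Psh B} (T : SlOb A) :
  pw_terminal T -> pw_terminal (pb_slob L T).
Proof. intros HT x. apply HT. Qed.

Lemma restrict_pw_product {A : Psh B} {U V P : SlOb A} (p1 : SlHom P U) (p2 : SlHom P V) :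
  pw_product p1 p2 -> pw_product (pb_slhom L p1) (pb_slhom L p2).
Proof. intros HP x. apply HP. Qed.

Lemma represents_restrict {A : Psh B} {Z Y E P : SlOb A}
  (p1 : SlHom P E) (p2 : SlHom P Z) (ev : SlHom P Y) {x : ob X} {a : pob A (fob L x)}
  (e : pob (sob E) (fob L x)) (psi : family Z Y (fob L x) a) :
  represents p1 p2 ev e psi ->
  represents (pb_slhom L p1) (pb_slhom L p2) (pb_slhom L ev) e (restrict_family psi).
Proof. intros Hr x' m. apply Hr. Qed.

(** Every natural family  [L^*Z -> L^*Y]  over [x] is the restriction of a
    unique natural family  [Z -> Y]  over [L x].  This is the pointwise
    content of "every [L^*/A] preserves exponentials". *)
Definition family_extension : Prop :=
  forall (A : Psh B) (Z Y : SlOb A) (x : ob X) (a : pob A (fob L x))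
    (phi : family (pb_slob L Z) (pb_slob L Y) x a), is_family phi ->
    exists psi : family Z Y (fob L x) a,
      is_family psi /\ fam_agree (restrict_family psi) phi /\
      forall psi' : family Z Y (fob L x) a, is_family psi' ->
        fam_agree (restrict_family psi') phi -> fam_agree psi psi'.

Section FromExtension.
Hypothesis Hext : family_extension.

(** The exponential element representing [phi] is the one representing its
    extension; conversely any representative of [phi] represents an extension
    of [phi], hence the extension. *)
Lemma extension_preserves_pw_exponential {A : Psh B} {Z Y E P : SlOb A}
  (p1 : SlHom P E) (p2 : SlHom P Z) (ev : SlHom P Y) :
  pw_product p1 p2 -> pw_exponential p1 p2 ev ->
  pw_exponential (pb_slhom L p1) (pb_slhom L p2) (pb_slhom L ev).
Proof.
  intros HP HE x a phi Hphi.
  destruct (Hext Hphi) as [psi [Hpsi [Hres Hext_uniq]]].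
  destruct (HE _ _ psi Hpsi) as [e [[He Hr] He_uniq]].
  exists e. split; [split|].
  - exact He.
  - apply (represents_agree (phi := restrict_family psi)); [reflexivity|exact Hres|].
    apply represents_restrict, Hr.
  - intros e' [He' Hr']. apply He_uniq. split; [exact He'|].
    destruct (element_family ev HP e' He') as [chi [Hchi Hrchi]].
    assert (Hagree : fam_agree (restrict_family chi) phi).
    { apply (represents_fam_unique (ev := pb_slhom L ev) (restrict_pw_product HP) He');
        [apply represents_restrict, Hrchi|exact Hr']. }
    apply (represents_agree (phi := chi)); [reflexivity| |exact Hrchi].
    intros d k t H H'. symmetry. apply (Hext_uniq chi Hchi Hagree).
Qed.

Lemma extension_molecular : molecular_induced L.
Proof.
  intros A. split; [|split].
  - intros T HT. apply sl_terminal_pw, restrict_pw_terminal, sl_terminal_pw, HT.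
  - intros U V P p1 p2 HP. apply sl_product_pw, restrict_pw_product, sl_product_pw, HP.
  - intros Y Z E P p1 p2 ev Hexp.
    assert (HP : pw_product p1 p2) by apply sl_product_pw, (proj1 Hexp).
    apply pw_exponential_sl_exponential; [apply restrict_pw_product, HP|].
    apply extension_preserves_pw_exponential; [exact HP|].
    apply sl_exponential_pw_exponential, Hexp.
Qed.

End FromExtension.

Lemma restricted_fam_represents {A : Psh B} {Z Y : SlOb A} {x : ob X} {a : pob A (fob L x)}
  (s : fam_elem Z Y (fob L x)) (phi : family (pb_slob L Z) (pb_slob L Y) x a) :
  fe_base s = a ->
  represents (pb_slhom L (fiber_fst (fam_obj Z Y) Z)) (pb_slhom L (fiber_snd (fam_obj Z Y) Z))
             (pb_slhom L (fam_eval Z Y)) s phi <->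
  fam_agree (restrict_family (fe_fam s)) phi.
Proof.
  intros Hs. split.
  - intros Hr x' m z H H'.
    assert (Hq : fe_base (pact (fam_psh Z Y) (fmap L m) s) = ncomp (sarr Z) (fob L x') z)
      by (simpl; rewrite Hs; symmetry; exact H').
    pose (q := exist _ (pact (fam_psh Z Y) (fmap L m) s, z) Hq
               : pob (sob (fiber (fam_obj Z Y) Z)) (fob L x')).
    etransitivity; [symmetry; exact (@fam_eval_at B A Z Y _ s _ (fmap L m) z H q eq_refl eq_refl)|].
    exact (Hr x' m z H' q eq_refl eq_refl).
  - intros Hag x' m z H q Hq1 Hq2.
    assert (H' : ncomp (sarr Z) (fob L x') z = pact A (fmap L m) (fe_base s))
      by (rewrite Hs; exact H).
    etransitivity; [exact (@fam_eval_at B A Z Y _ s _ (fmap L m) z H' q Hq1 Hq2)|]. apply Hag.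
Qed.

(** Molecularity yields unique extensions: apply it to the canonical exponential. *)
Lemma molecular_extension : molecular_induced L -> family_extension.
Proof.
  intros Hmol A Z Y x a phi Hphi.
  pose proof (sl_exponential_pw_exponential
                (proj2 (proj2 (Hmol A)) _ _ _ _ _ _ _ (fam_obj_exponential Z Y))) as HE.
  destruct (HE x a phi Hphi) as [s [[Hs Hr] Huniq]].
  destruct s as [b psi Hpsi]. simpl in Hs. subst b.
  exists psi. split; [exact Hpsi|split].
  - exact (proj1 (restricted_fam_represents {| fe_base := a; fe_fam := psi; fe_is_family := Hpsi |}
                     phi eq_refl) Hr).
  - intros psi' Hpsi' Hag.
    pose (s' := {| fe_base := a; fe_fam := psi'; fe_is_family := Hpsi' |}).
    apply (@fam_elem_agree B A Z Y (fob L x) {| fe_base := a; fe_fam := psi; fe_is_family := Hpsi |} s').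
    apply Huniq. split; [reflexivity|].
    exact (proj2 (restricted_fam_represents s' phi eq_refl) Hag).
Qed.

End InverseImage.

Section Transposition.
Context {X B : Cat} {L : Functor X B} {R : Functor B X} (adj : Adjunction L R).

Definition adj_transpose {y : ob X} {b : ob B} (u : hom y (fob R b)) : hom (fob L y) b :=
  cmp (counit adj b) (fmap L u).

Lemma transpose_of_unit {y : ob X} {b : ob B} (f : hom (fob L y) b) :
  adj_transpose (cmp (fmap R f) (unit adj y)) = f.
Proof.
  unfold adj_transpose.
  rewrite fmap_cmp, cmp_assoc, counit_nat, <- cmp_assoc, triangle_L, cmp_id_r. reflexivity.
Qed.

Lemma unit_of_transpose {y : ob X} {b : ob B} (u : hom y (fob R b)) :
  cmp (fmap R (adj_transpose u)) (unit adj y) = u.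
Proof.
  unfold adj_transpose.
  rewrite fmap_cmp, <- cmp_assoc, <- unit_nat, cmp_assoc, triangle_R, cmp_id_l. reflexivity.
Qed.

Lemma transpose_cmp {y y' : ob X} {b : ob B} (u : hom y (fob R b)) (w : hom y' y) :
  adj_transpose (cmp u w) = cmp (adj_transpose u) (fmap L w).
Proof. unfold adj_transpose. rewrite fmap_cmp. apply cmp_assoc. Qed.

Lemma transpose_natural {y : ob X} {b b' : ob B} (u : hom y (fob R b)) (n : hom b b') :
  adj_transpose (cmp (fmap R n) u) = cmp n (adj_transpose u).
Proof.
  unfold adj_transpose. rewrite fmap_cmp, cmp_assoc, counit_nat. symmetry. apply cmp_assoc.
Qed.

Lemma pullback_transpose_comm {x y : ob X} {d : ob B} (k : hom d (fob L x))
  (v : hom y x) (u : hom y (fob R d)) :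
  is_pullback (unit adj x) (fmap R k) v u -> cmp k (adj_transpose u) = fmap L v.
Proof.
  intros [Hcomm _]. rewrite <- transpose_natural, <- Hcomm, transpose_cmp.
  unfold adj_transpose at 1. rewrite triangle_L. apply cmp_id_l.
Qed.

Lemma counit_iso (HR : fully_faithful R) (b : ob B) : is_iso (counit adj b).
Proof.
  destruct (proj2 (HR b (fob L (fob R b))) (unit adj (fob R b))) as [d Hd].
  exists d. split.
  - rewrite <- (transpose_of_unit (cmp d (counit adj b))), <- (transpose_of_unit (idm _)).
    f_equal. rewrite !fmap_cmp, fmap_id, Hd, <- cmp_assoc, triangle_R, cmp_id_l, cmp_id_r.
    reflexivity.
  - apply (proj1 (HR b b)). rewrite fmap_cmp, Hd, triangle_R, fmap_id. reflexivity.
Qed.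

End Transposition.

Section SemiLeftExactCovers.
Context {X B : Cat} {L : Functor X B} {R : Functor B X} (adj : Adjunction L R).
Hypothesis HR : fully_faithful R.
Hypothesis HpbX : has_pullbacks X.
Hypothesis Hsle : semi_left_exact adj.

(** It
    exhibits [k] as isomorphic, over [L x], to the image [L v] of a map of [X]. *)
Record cover (x : ob X) (d : ob B) (k : hom d (fob L x)) := {
  cov_ob : ob X;
  cov_v : hom cov_ob x;
  cov_u : hom cov_ob (fob R d);
  cov_pb : is_pullback (unit adj x) (fmap R k) cov_v cov_u;
  cov_inv : hom d (fob L cov_ob);
  cov_inv_r : cmp (adj_transpose adj cov_u) cov_inv = idm d;
  cov_inv_l : cmp cov_inv (adj_transpose adj cov_u) = idm (fob L cov_ob) }.
Arguments cov_ob {x d k}.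
Arguments cov_v {x d k}.
Arguments cov_u {x d k}.
Arguments cov_pb {x d k}.
Arguments cov_inv {x d k}.
Arguments cov_inv_r {x d k}.
Arguments cov_inv_l {x d k}.

(** Semi-left-exactness says precisely that covers exist. *)
Lemma cover_exists x d (k : hom d (fob L x)) : inhabited (cover x d k).
Proof.
  destruct (HpbX _ _ _ (unit adj x) (fmap R k)) as [y [v [u Hpb]]].
  destruct (iso_cmp (counit_iso adj HR d) (@Hsle x d (fmap R k) y v u Hpb)) as [inv [Hinv1 Hinv2]].
  exact (inhabits {| cov_pb := Hpb; cov_inv_r := Hinv2; cov_inv_l := Hinv1 |}).
Qed.

Definition the_cover x d (k : hom d (fob L x)) : cover x d k :=
  epsilon (cover_exists x d k) (fun _ => True).

Lemma cover_comm {x d} {k : hom d (fob L x)} (c : cover x d k) :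
  cmp k (adj_transpose adj (cov_u c)) = fmap L (cov_v c).
Proof. apply pullback_transpose_comm, cov_pb. Qed.

Lemma cover_compare {x d e} {k : hom d (fob L x)} {n : hom e d}
  (c : cover x d k) (c' : cover x e (cmp k n)) :
  exists r : hom (cov_ob c') (cov_ob c),
    cmp (cov_v c) r = cov_v c' /\
    cmp (adj_transpose adj (cov_u c)) (fmap L r) = cmp n (adj_transpose adj (cov_u c')) /\
    cmp (fmap L r) (cov_inv c') = cmp (cov_inv c) n.
Proof.
  destruct (proj2 (cov_pb c) (cov_ob c') (cov_v c') (cmp (fmap R n) (cov_u c')))
    as [r [[Hr1 Hr2] _]].
  { rewrite (proj1 (cov_pb c')), fmap_cmp. symmetry. apply cmp_assoc. }
  assert (Ht : cmp (adj_transpose adj (cov_u c)) (fmap L r) =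
               cmp n (adj_transpose adj (cov_u c')))
    by (rewrite <- transpose_cmp, Hr2; apply transpose_natural).
  exists r. split; [exact Hr1|split; [exact Ht|]].
  transitivity (cmp (cmp (cov_inv c) (adj_transpose adj (cov_u c))) (cmp (fmap L r) (cov_inv c'))).
  - rewrite cov_inv_l. symmetry. apply cmp_id_l.
  - rewrite <- cmp_assoc, (cmp_assoc (adj_transpose adj (cov_u c))), Ht.
    rewrite <- (cmp_assoc n), cov_inv_r, cmp_id_r. reflexivity.
Qed.

Lemma cover_of_image {x x'} {m : hom x' x} (c : cover x (fob L x') (fmap L m)) :
  exists j : hom x' (cov_ob c), cmp (cov_v c) j = m /\ fmap L j = cov_inv c.
Proof.
  destruct (proj2 (cov_pb c) x' m (unit adj x')) as [j [[Hj1 Hj2] _]].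
  { apply unit_nat. }
  exists j. split; [exact Hj1|].
  assert (Ht : cmp (adj_transpose adj (cov_u c)) (fmap L j) = idm _)
    by (rewrite <- transpose_cmp, Hj2; apply triangle_L).
  rewrite <- (cmp_id_l (fmap L j)), <- (cov_inv_l c), <- cmp_assoc, Ht. apply cmp_id_r.
Qed.

Section Extension.
Context {A : Psh B} {Z Y : SlOb A} {x : ob X} {a : pob A (fob L x)}.
Context (phi : family (pb_slob L Z) (pb_slob L Y) x a) (Hphi : is_family phi).

Lemma cover_over {d} {k : hom d (fob L x)} (c : cover x d k) (t : pob (sob Z) d) :
  ncomp (sarr Z) d t = pact A k a ->
  ncomp (sarr Z) (fob L (cov_ob c)) (pact (sob Z) (adj_transpose adj (cov_u c)) t) =
  pact A (fmap L (cov_v c)) a.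
Proof. intros H. rewrite nnat, H, <- pact_cmp, cover_comm. reflexivity. Qed.

(** The extension of [phi]: transport the argument [(k, t)] along the cover of
    [k] to an argument of [phi], and transport the value back. *)
Definition extend_family : family Z Y (fob L x) a :=
  fun d k t H =>
    let c := the_cover x d k in
    pact (sob Y) (cov_inv c)
      (phi (cov_ob c) (cov_v c) (pact (sob Z) (adj_transpose adj (cov_u c)) t) (cover_over c t H)).

Lemma extend_is_family : is_family extend_family.
Proof.
  split.
  - intros d k t H. unfold extend_family. rewrite nnat.
    pose proof (fam_over Hphi) as Hover. simpl in Hover. rewrite Hover. rewrite <- pact_cmp, <- cover_comm, <- cmp_assoc.
    rewrite cov_inv_r, cmp_id_r. reflexivity.
  - intros d e k n t H H'. unfold extend_family.
    destruct (cover_compare (the_cover x d k) (the_cover x e (cmp k n))) as [r [Hr1 [Hr2 Hr3]]].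
    rewrite <- pact_cmp, <- Hr3, pact_cmp. f_equal.
    apply (fam_nat_eq Hphi).
    + symmetry. exact Hr1.
    + simpl. rewrite <- !pact_cmp, Hr2. reflexivity.
Qed.

Lemma extend_restricts : fam_agree (restrict_family L extend_family) phi.
Proof.
  intros x' m z H H'. unfold restrict_family, extend_family.
  destruct (cover_of_image (the_cover x (fob L x') (fmap L m))) as [j [Hj1 Hj2]].
  rewrite <- Hj2. symmetry. apply (fam_nat_eq Hphi).
  - symmetry. exact Hj1.
  - simpl. rewrite <- pact_cmp, Hj2, cov_inv_r. symmetry. apply pact_id.
Qed.

(** Any natural extension is given by the transport formula, by naturality
    along the transposed projection of the cover. *)
Lemma extend_unique (psi : family Z Y (fob L x) a) :
  is_family psi -> fam_agree (restrict_family L psi) phi -> fam_agree extend_family psi.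
Proof.
  intros Hpsi Hres d k t H H'. unfold extend_family.
  set (c := the_cover x d k).
  assert (Hval : phi (cov_ob c) (cov_v c) (pact (sob Z) (adj_transpose adj (cov_u c)) t)
                     (cover_over c t H) =
                 pact (sob Y) (adj_transpose adj (cov_u c)) (psi d k t H')).
  { rewrite <- (Hres _ _ _ (cover_over c t H)). unfold restrict_family.
    apply (fam_nat_eq Hpsi); [symmetry; apply cover_comm|reflexivity]. }
  rewrite Hval, <- pact_cmp, cov_inv_r. apply pact_id.
Qed.

End Extension.

Lemma sle_family_extension : family_extension L.
Proof.
  intros A Z Y x a phi Hphi. exists (extend_family phi).
  split; [apply extend_is_family, Hphi|split; [apply extend_restricts, Hphi|]].
  apply extend_unique.
Qed.

End SemiLeftExactCovers.

Section ExtensionGivesSemiLeftExactness.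
Context {X B : Cat} {L : Functor X B} {R : Functor B X} (adj : Adjunction L R).
Hypothesis Hext : family_extension L.

Context {x : ob X} {b : ob B} (g : hom b (fob L x)) {y : ob X} (v : hom y x) (u : hom y (fob R b)).
Hypothesis Hpb : is_pullback (unit adj x) (fmap R g) v u.

Let theta : hom (fob L y) b := adj_transpose adj u.

(** The test objects, over  [A = hom(-, L x)]:  [Z] is [b] via [g], and
    [W] is [L y] via [L v]. *)
Let A : Psh B := representable (fob L x).
Let Z : SlOb A := @elem_slice B A b g.
Let W : SlOb A := @elem_slice B A (fob L y) (fmap L v).

Lemma pullback_lift {x'} (m : hom x' x) (z : hom (fob L x') b) :
  cmp g z = cmp (idm _) (fmap L m) ->
  exists! w : hom x' y, cmp v w = m /\ cmp u w = cmp (fmap R z) (unit adj x').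
Proof.
  intros H. apply (proj2 Hpb). rewrite cmp_id_l in H.
  rewrite cmp_assoc, <- fmap_cmp, H. apply unit_nat.
Qed.

Lemma pullback_lift_transpose {x'} (z : hom (fob L x') b) (w : hom x' y) :
  cmp u w = cmp (fmap R z) (unit adj x') -> cmp theta (fmap L w) = z.
Proof.
  intros Hw. unfold theta. rewrite <- transpose_cmp, Hw. apply transpose_of_unit.
Qed.

Definition lift_family : family (pb_slob L Z) (pb_slob L W) x (idm (fob L x)) :=
  fun x' m z H => fmap L (choose (pullback_lift m z H)).

Lemma lift_family_spec {x'} (m : hom x' x) z H :
  cmp v (choose (pullback_lift m z H)) = m /\
  cmp u (choose (pullback_lift m z H)) = cmp (fmap R z) (unit adj x').
Proof. apply (choose_spec (pullback_lift m z H)). Qed.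

Lemma lift_family_unique {x'} (m : hom x' x) z H (w : hom x' y) :
  cmp v w = m -> cmp u w = cmp (fmap R z) (unit adj x') -> choose (pullback_lift m z H) = w.
Proof.
  intros Hw1 Hw2. apply (unique_agree (pullback_lift m z H)); [apply lift_family_spec|auto].
Qed.

Lemma lift_is_family : is_family lift_family.
Proof.
  split.
  - intros x' m z H. simpl. unfold lift_family.
    rewrite <- fmap_cmp, (proj1 (lift_family_spec m z H)). symmetry. apply cmp_id_l.
  - intros x' e m n z H H'. unfold lift_family. simpl. rewrite <- fmap_cmp. f_equal.
    destruct (lift_family_spec m z H) as [Hw1 Hw2].
    apply lift_family_unique.
    + rewrite cmp_assoc, Hw1. reflexivity.
    + rewrite cmp_assoc, Hw2, <- cmp_assoc, unit_nat, cmp_assoc, <- fmap_cmp. reflexivity.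
Qed.

(** Its extension to [L x], evaluated at the generic argument [(g, id_b)],
    is the candidate inverse [s : b -> L y] of [θ]. *)
Definition lift_extension : family Z W (fob L x) (idm (fob L x)) :=
  choose (Hext lift_is_family).

Lemma lift_extension_spec :
  is_family lift_extension /\ fam_agree (restrict_family L lift_extension) lift_family.
Proof. destruct (choose_spec (Hext lift_is_family)) as [H1 [H2 _]]. split; assumption. Qed.

Lemma generic_over : ncomp (sarr Z) b (idm b) = pact A g (idm (fob L x)).
Proof. simpl. rewrite cmp_id_l, cmp_id_r. reflexivity. Qed.

Definition theta_inv : hom b (fob L y) := lift_extension b g (idm b) generic_over.

Lemma theta_inv_over : cmp (fmap L v) theta_inv = g.
Proof.
  pose proof (fam_over (proj1 lift_extension_spec) b g (idm b) generic_over) as E.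
  simpl in E. rewrite cmp_id_l in E. exact E.
Qed.

(** [s ∘ θ = id]: naturality along [θ] reduces it to the lift of [θ] itself,
    which is the identity of [y]. *)
Lemma theta_inv_l : cmp theta_inv theta = idm (fob L y).
Proof.
  destruct lift_extension_spec as [Hfam Hres].
  assert (Hover : ncomp (sarr (pb_slob L Z)) y theta = pact (pb_psh L A) v (idm (fob L x))).
  { simpl. rewrite cmp_id_l. apply pullback_transpose_comm, Hpb. }
  transitivity (lift_family y v theta Hover).
  - rewrite <- (Hres y v theta Hover Hover). unfold restrict_family.
    symmetry. apply (fam_nat_eq Hfam b (fob L y) g theta (idm b) generic_over).
    + symmetry. apply pullback_transpose_comm, Hpb.
    + simpl. symmetry. apply cmp_id_l.
  - unfold lift_family. rewrite (lift_family_unique theta Hover (idm y)).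
    + apply fmap_id.
    + apply cmp_id_r.
    + rewrite cmp_id_r. symmetry. apply unit_of_transpose.
Qed.

(** [θ ∘ s = id]: the families  [t |-> θ ∘ s ∘ t]  and  [t |-> t]  from [Z] to
    [Z] both extend the identity family of [L^*Z], so they coincide. *)
Lemma theta_inv_r : cmp theta theta_inv = idm b.
Proof.
  pose (chi := (fun d k t H => cmp theta (cmp theta_inv t)) : family Z Z (fob L x) (idm _)).
  assert (Hchi : is_family chi).
  { split.
    - intros d k t H. simpl in H |- *. unfold chi.
      rewrite <- H, !cmp_assoc. unfold theta.
      rewrite (pullback_transpose_comm adj g Hpb), theta_inv_over. reflexivity.
    - intros d e k n t H H'. unfold chi. simpl. rewrite !cmp_assoc. reflexivity. }
  assert (Hchi_res : fam_agree (restrict_family L chi) (id_family (pb_slob L Z) x (idm _))).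
  { intros x' m z H H'. unfold restrict_family, chi, id_family. simpl.
    destruct (lift_family_spec m z H) as [_ Hw].
    rewrite <- (pullback_lift_transpose z _ Hw), (cmp_assoc theta_inv), theta_inv_l.
    rewrite cmp_id_l. reflexivity. }
  destruct (Hext (id_family_is_family (pb_slob L Z) x (idm _))) as [psi [_ [_ Huniq]]].
  pose proof (Huniq chi Hchi Hchi_res b g (idm b) generic_over generic_over) as E1.
  pose proof (Huniq (id_family Z _ _) (id_family_is_family Z _ _) (fun _ _ _ _ _ => eq_refl)
                    b g (idm b) generic_over generic_over) as E2.
  unfold chi, id_family in E1, E2. rewrite E1, cmp_id_r in E2. exact E2.
Qed.

Lemma extension_transpose_iso : is_iso theta.
Proof. exists theta_inv. split; [apply theta_inv_l|apply theta_inv_r]. Qed.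

End ExtensionGivesSemiLeftExactness.

(** Unique extension of families forces semi-left-exactness: [L u] is the
    transpose [θ] up to the invertible counit. *)
Lemma extension_semi_left_exact {X B : Cat} {L : Functor X B} {R : Functor B X}
  (adj : Adjunction L R) :
  fully_faithful R -> family_extension L -> semi_left_exact adj.
Proof.
  intros HR Hext x b g' y v u Hpb.
  destruct (proj2 (HR b (fob L x)) g') as [g <-].
  apply (iso_cancel_l (fmap L u) (counit_iso adj HR b)).
  exact (extension_transpose_iso adj Hext g Hpb).
Qed.

Theorem theorem5p3 (X B : Cat) (HX : has_finite_limits X) (HB : has_finite_limits B)
  (L : Functor X B) (R : Functor B X) (adj : Adjunction L R)
  (HR : fully_faithful R) :
  molecular_induced L <-> semi_left_exact adj.
Proof.
  split.
  - intros Hmol. apply (extension_semi_left_exact adj HR), molecular_extension, Hmol.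
  - intros Hsle. apply extension_molecular, (sle_family_extension HR (proj2 HX) Hsle).
Qed.
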